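(* Let $G$ be a discrete group acting by homeomorphisms $\alpha$ on a locally compact Hausdorff space $X$, and let $\sigma$ be the induced action on $A=C_0(X)$, $\sigma_g(f)=f\circ\alpha_g^{-1}$. The following are equivalent: (i) $\sigma$ is $G$-separating, i.e. for all $a,b\in A_+$, $c\in A$, $\varepsilon>0$ there exist $d_1,d_2\in A$ and $g_1,g_2\in G$ with $\|d_1^*ad_1-\sigma_{g_1}(a)\|<\varepsilon$, $\|d_2^*bd_2-\sigma_{g_2}(b)\|<\varepsilon$ and $\|d_1^*cd_2\|<\varepsilon$; (ii) for all open $U_1,U_2\subseteq X$ and compact $K_1,K_2\subseteq X$ with $K_1\subseteq U_1$, $K_2\subseteq U_2$, there exist $g_1,g_2\in G$ with $\alpha_{g_1}(K_1)\subseteq U_1$, $\alpha_{g_2}(K_2)\subseteq U_2$ and $\alpha_{g_1}(K_1)\cap\alpha_{g_2}(K_2)=\emptyset$. *)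

From Stdlib Require Import Reals List.
Open Scope R_scope.

Definition C := (R * R)%type.
Definition Cadd (z w : C) : C := (fst z + fst w, snd z + snd w).
Definition Csub (z w : C) : C := (fst z - fst w, snd z - snd w).
Definition Cmul (z w : C) : C :=
  (fst z * fst w - snd z * snd w, fst z * snd w + snd z * fst w).
Definition Cconj (z : C) : C := (fst z, - snd z).
Definition Cabs (z : C) : R := sqrt (fst z * fst z + snd z * snd z).

Record topology (X : Type) := Topology {
  is_open : (X -> Prop) -> Prop;
  open_full : is_open (fun _ => True);
  open_inter : forall U V, is_open U -> is_open V ->
                 is_open (fun x => U x /\ V x);
  open_union : forall (I : Type) (F : I -> X -> Prop),
                 (forall i, is_open (F i)) -> is_open (fun x => exists i, F i x)
}.
Arguments is_open {X} t _.

Definition subset {X : Type} (A B : X -> Prop) : Prop := forall x, A x -> B x.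

Definition compact {X : Type} (T : topology X) (K : X -> Prop) : Prop :=
  forall (I : Type) (F : I -> X -> Prop),
    (forall i, is_open T (F i)) ->
    subset K (fun x => exists i, F i x) ->
    exists l : list I, subset K (fun x => exists i, In i l /\ F i x).

Definition hausdorff {X : Type} (T : topology X) : Prop :=
  forall x y : X, x <> y ->
    exists U V, is_open T U /\ is_open T V /\ U x /\ V y /\
      forall z, ~ (U z /\ V z).

Definition locally_compact {X : Type} (T : topology X) : Prop :=
  forall x : X, exists U K, is_open T U /\ compact T K /\ U x /\ subset U K.

Definition continuous {X : Type} (T : topology X) (f : X -> X) : Prop :=
  forall U, is_open T U -> is_open T (fun x => U (f x)).

Definition homeomorphism {X : Type} (T : topology X) (f : X -> X) : Prop :=
  continuous T f /\ exists h : X -> X,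
    continuous T h /\ (forall x, h (f x) = x) /\ (forall x, f (h x) = x).

Definition continuous_C {X : Type} (T : topology X) (f : X -> C) : Prop :=
  forall x eps, 0 < eps -> exists U, is_open T U /\ U x /\
     forall y, U y -> Cabs (Csub (f y) (f x)) < eps.

Definition vanishes_at_infinity {X : Type} (T : topology X) (f : X -> C) : Prop :=
  forall eps, 0 < eps -> exists K, compact T K /\
     forall x, ~ K x -> Cabs (f x) < eps.

Definition in_C0 {X : Type} (T : topology X) (f : X -> C) : Prop :=
  continuous_C T f /\ vanishes_at_infinity T f.

Definition positive_C0 {X : Type} (T : topology X) (f : X -> C) : Prop :=
  in_C0 T f /\ forall x, snd (f x) = 0 /\ 0 <= fst (f x).

Definition norm_lt {X : Type} (f : X -> C) (eps : R) : Prop :=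
  exists delta, delta < eps /\ forall x, Cabs (f x) <= delta.

Record group (G : Type) := Group {
  gmul : G -> G -> G;
  gone : G;
  ginv : G -> G;
  gmulA : forall a b c, gmul a (gmul b c) = gmul (gmul a b) c;
  gmul1g : forall a, gmul gone a = a;
  gmulg1 : forall a, gmul a gone = a;
  gmulVg : forall a, gmul (ginv a) a = gone;
  gmulgV : forall a, gmul a (ginv a) = gone
}.
Arguments gmul {G} g _ _.
Arguments gone {G} g.
Arguments ginv {G} g _.

Definition action_by_homeos {X G : Type} (T : topology X) (Gr : group G)
    (alpha : G -> X -> X) : Prop :=
  (forall x, alpha (gone Gr) x = x) /\
  (forall g h x, alpha (gmul Gr g h) x = alpha g (alpha h x)) /\
  (forall g, homeomorphism T (alpha g)).

Definition sigma {X G : Type} (Gr : group G) (alpha : G -> X -> X)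
    (g : G) (f : X -> C) : X -> C :=
  fun x => f (alpha (ginv Gr g) x).

Definition G_separating {X G : Type} (T : topology X) (Gr : group G)
    (alpha : G -> X -> X) : Prop :=
  forall a b c : X -> C,
    positive_C0 T a -> positive_C0 T b -> in_C0 T c ->
    forall eps, 0 < eps ->
    exists d1 d2 : X -> C, in_C0 T d1 /\ in_C0 T d2 /\
    exists g1 g2 : G,
      norm_lt (fun x => Csub (Cmul (Cmul (Cconj (d1 x)) (a x)) (d1 x))
                             (sigma Gr alpha g1 a x)) eps /\
      norm_lt (fun x => Csub (Cmul (Cmul (Cconj (d2 x)) (b x)) (d2 x))
                             (sigma Gr alpha g2 b x)) eps /\
      norm_lt (fun x => Cmul (Cmul (Cconj (d1 x)) (c x)) (d2 x)) eps.

Definition compact_separating {X G : Type} (T : topology X) (Gr : group G)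
    (alpha : G -> X -> X) : Prop :=
  forall U1 U2 K1 K2 : X -> Prop,
    is_open T U1 -> is_open T U2 -> compact T K1 -> compact T K2 ->
    subset K1 U1 -> subset K2 U2 ->
    exists g1 g2 : G,
      (forall x, K1 x -> U1 (alpha g1 x)) /\
      (forall x, K2 x -> U2 (alpha g2 x)) /\
      (forall x1 x2, K1 x1 -> K2 x2 -> alpha g1 x1 <> alpha g2 x2).

(* (ii) => (i): for positive [a] and [delta > 0], move [{a >= delta}] inside
   [{a > delta/2}]; the explicit cut-off [e = sqrt (max (sigma_g a - delta, 0) /
   max (a, delta/2))] satisfies [||e^* a e - sigma_g a|| <= delta] and is supported in
   the moved compact set.  Disjointness of the two moved sets makes [d1^* c d2 = 0].
   (i) => (ii): feed [u^2], [v^2], [uv] to (i), where [u], [v] are Urysohn functions of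
   [K1 ⊆ U1], [K2 ⊆ U2]; comparing moduli shows the moved compact sets stay inside the
   supports of [u], [v] and cannot meet. *)

From Stdlib Require Import Reals Lra Lia Psatz ZArith List.
From Stdlib Require Import Classical ClassicalEpsilon FunctionalExtensionality PropExtensionality.
(* Imported after the Stdlib so that [compact] refers to the topological notion of [Defs]. *)
From Pilot Require Import Defs.
Open Scope R_scope.

Definition disjoint {X : Type} (A B : X -> Prop) : Prop := forall z, ~ (A z /\ B z).

Section OpenAndCompactSets.
Variables (X : Type) (T : topology X).

Lemma open_ext (U V : X -> Prop) :
  (forall x, U x <-> V x) -> is_open T U -> is_open T V.
Proof.
  intros HUV HU. replace V with U; auto.
  apply functional_extensionality; intro x; apply propositional_extensionality; auto.
Qed.

Lemma compact_ext (K K' : X -> Prop) :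
  (forall x, K x <-> K' x) -> compact T K -> compact T K'.
Proof.
  intros HKK' HK. replace K' with K; auto.
  apply functional_extensionality; intro x; apply propositional_extensionality; auto.
Qed.

Lemma open_local (S : X -> Prop) :
  (forall x, S x -> exists W, is_open T W /\ W x /\ subset W S) -> is_open T S.
Proof.
  intros HS.
  apply (open_ext (fun x => exists W : {W : X -> Prop | is_open T W /\ subset W S},
                                proj1_sig W x)).
  - intros x; split.
    + intros [[W [HW HWS]] Hx]; simpl in Hx; auto.
    + intros Hx; destruct (HS x Hx) as [W [HW [HWx HWS]]].
      exists (exist _ W (conj HW HWS)); auto.
  - apply open_union. intros [W [HW HWS]]; auto.
Qed.

Lemma open_finite_inter (A : Type) (l : list A) (F : A -> X -> Prop) :
  (forall a, In a l -> is_open T (F a)) -> is_open T (fun x => forall a, In a l -> F a x).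
Proof.
  induction l as [|a l IH]; intros HF.
  - apply (open_ext (fun _ => True)); [|apply open_full].
    intros x; split; auto. intros _ b [].
  - apply (open_ext (fun x => F a x /\ (forall b, In b l -> F b x))).
    + intros x; split.
      * intros [Ha Hl] b [<-|Hb]; auto.
      * intros H; split; [apply H; left|intros b Hb; apply H; right]; auto.
    + apply open_inter; [apply HF; left; auto|apply IH; intros b Hb; apply HF; right; auto].
Qed.

Lemma compact_finite_union (A : Type) (l : list A) (F : A -> X -> Prop) :
  (forall a, In a l -> compact T (F a)) -> compact T (fun x => exists a, In a l /\ F a x).
Proof.
  intros HF I G HG. induction l as [|a l IH]; intros Hcov.
  - exists nil. intros x [b [[] _]].
  - destruct (HF a (in_eq a l) I G HG) as [la Hla].
    { intros x Hx; apply Hcov; exists a; split; [left|]; auto. }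
    destruct IH as [lb Hlb].
    { intros b Hb; apply HF; right; auto. }
    { intros x [b [Hb Hx]]; apply Hcov; exists b; split; [right|]; auto. }
    exists (la ++ lb). intros x [b [[<-|Hb] Hx]].
    + destruct (Hla x Hx) as [i [Hi HGi]]. exists i; split; auto. apply in_or_app; auto.
    + destruct (Hlb x (ex_intro _ b (conj Hb Hx))) as [i [Hi HGi]].
      exists i; split; auto. apply in_or_app; auto.
Qed.

Lemma compact_diff_open (K U : X -> Prop) :
  compact T K -> is_open T U -> compact T (fun x => K x /\ ~ U x).
Proof.
  intros HK HU I F HF Hcov.
  destruct (HK (option I) (fun o => match o with Some i => F i | None => U end))
    as [l Hl].
  - intros [i|]; auto.
  - intros x Hx. destruct (classic (U x)) as [HUx|HUx].
    + exists None; auto.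
    + destruct (Hcov x (conj Hx HUx)) as [i Hi]. exists (Some i); auto.
  - exists (flat_map (fun o => match o with Some i => i :: nil | None => nil end) l).
    intros x [Hx HUx]. destruct (Hl x Hx) as [[i|] [Hin Hi]]; [|contradiction].
    exists i; split; auto. apply in_flat_map. exists (Some i); simpl; auto.
Qed.

(* The image [f(K)] = [h^{-1}(K)] of a compact set under a continuous bijection [f]
   with inverse [h] is compact. *)
Lemma compact_bijective_image (f h : X -> X) (K : X -> Prop) :
  continuous T f -> (forall y, h (f y) = y) -> (forall x, f (h x) = x) ->
  compact T K -> compact T (fun x => K (h x)).
Proof.
  intros Hf Hhf Hfh HK I F HF Hcov.
  destruct (HK I (fun i y => F i (f y))) as [l Hl].
  - intros i; apply Hf; auto.
  - intros y Hy. apply Hcov. rewrite Hhf; auto.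
  - exists l. intros x Hx. destruct (Hl (h x) Hx) as [i [Hi HFi]].
    exists i; rewrite Hfh in HFi; auto.
Qed.

End OpenAndCompactSets.

Section Hausdorff.
Variables (X : Type) (T : topology X).
Hypothesis HT : hausdorff T.

(* If every point of a compact set [K] can be separated from a set [S] by disjoint
   open sets, then [K] itself can: cover [K] by the first open sets, extract a finite
   subcover, and intersect the finitely many corresponding open sets around [S]. *)
Lemma compact_separation (K S : X -> Prop) :
  compact T K ->
  (forall y, K y -> exists U V, is_open T U /\ is_open T V /\ U y /\ subset S V /\
                                disjoint U V) ->
  exists U V, is_open T U /\ is_open T V /\ subset K U /\ subset S V /\ disjoint U V.
Proof.
  intros HK Hsep.
  set (I := {p : (X -> Prop) * (X -> Prop) | is_open T (fst p) /\ is_open T (snd p) /\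
                                           subset S (snd p) /\ disjoint (fst p) (snd p)}).
  destruct (HK I (fun i => fst (proj1_sig i))) as [l Hl].
  - intros [p Hp]; exact (proj1 Hp).
  - intros y Hy. destruct (Hsep y Hy) as [U [V [HU [HV [HUy [HSV HUV]]]]]].
    exists (exist _ (U, V) (conj HU (conj HV (conj HSV HUV)))); auto.
  - exists (fun x => exists i, In i l /\ fst (proj1_sig i) x),
           (fun x => forall i, In i l -> snd (proj1_sig i) x).
    split; [|split; [|split; [|split]]].
    + apply open_local. intros x [i [Hi Hx]]. exists (fst (proj1_sig i)).
      split; [destruct i as [p Hp]; exact (proj1 Hp)|split; auto].
      intros z Hz; exists i; auto.
    + apply open_finite_inter. intros [p Hp] _; exact (proj1 (proj2 Hp)).
    + exact Hl.
    + intros z Hz [p Hp] _. exact (proj1 (proj2 (proj2 Hp)) z Hz).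
    + intros z [[i [Hi Hz1]] Hz2]. specialize (Hz2 i Hi).
      destruct i as [p Hp]. exact (proj2 (proj2 (proj2 Hp)) z (conj Hz1 Hz2)).
Qed.

Lemma point_compact_separation (K : X -> Prop) (x : X) :
  compact T K -> ~ K x ->
  exists U V, is_open T U /\ is_open T V /\ subset K U /\ V x /\ disjoint U V.
Proof.
  intros HK Hx.
  destruct (compact_separation K (fun z => z = x) HK) as [U [V [HU [HV [HKU [HxV HUV]]]]]].
  - intros y Hy. assert (Hyx : y <> x) by (intros ->; auto).
    destruct (HT y x Hyx) as [U [V [HU [HV [HUy [HVx HUV]]]]]].
    exists U, V; repeat split; auto. intros z ->; auto.
  - exists U, V; repeat split; auto.
Qed.

Lemma compact_complement_open (K : X -> Prop) : compact T K -> is_open T (fun x => ~ K x).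
Proof.
  intros HK. apply open_local. intros x Hx.
  destruct (point_compact_separation K x HK Hx) as [U [V [_ [HV [HKU [HVx HUV]]]]]].
  exists V; repeat split; auto. intros z Hz HKz. apply (HUV z); auto.
Qed.

Lemma compact_compact_separation (K L : X -> Prop) :
  compact T K -> compact T L -> disjoint K L ->
  exists U V, is_open T U /\ is_open T V /\ subset K U /\ subset L V /\ disjoint U V.
Proof.
  intros HK HL HKL. apply compact_separation; auto.
  intros y Hy. assert (HyL : ~ L y) by (intros HLy; apply (HKL y); auto).
  destruct (point_compact_separation L y HL HyL) as [U [V [HU [HV [HLU [HVy HUV]]]]]].
  exists V, U; repeat split; auto. intros z [Hz1 Hz2]; apply (HUV z); auto.
Qed.

End Hausdorff.

Section LocallyCompact.
Variables (X : Type) (T : topology X).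
Hypotheses (HT : hausdorff T) (HLC : locally_compact T).

Lemma compact_neighbourhood (K : X -> Prop) :
  compact T K -> exists V L, is_open T V /\ compact T L /\ subset K V /\ subset V L.
Proof.
  intros HK.
  set (I := {p : (X -> Prop) * (X -> Prop) | is_open T (fst p) /\ compact T (snd p) /\
                                           subset (fst p) (snd p)}).
  destruct (HK I (fun i => fst (proj1_sig i))) as [l Hl].
  - intros [p Hp]; exact (proj1 Hp).
  - intros y _. destruct (HLC y) as [V [L [HV [HL [HVy HVL]]]]].
    exists (exist _ (V, L) (conj HV (conj HL HVL))); auto.
  - exists (fun x => exists i, In i l /\ fst (proj1_sig i) x),
           (fun x => exists i, In i l /\ snd (proj1_sig i) x).
    split; [|split; [|split]].
    + apply open_local. intros x [i [Hi Hx]]. exists (fst (proj1_sig i)).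
      split; [destruct i as [p Hp]; exact (proj1 Hp)|split; auto].
      intros z Hz; exists i; auto.
    + apply compact_finite_union. intros [p Hp] _; exact (proj1 (proj2 Hp)).
    + exact Hl.
    + intros x [i [Hi Hx]]. exists i; split; auto.
      destruct i as [p Hp]. exact (proj2 (proj2 Hp) x Hx).
Qed.

(* We cut the compact
   neighbourhood [L0] of [K] down by an open set separating [K] from [L0 \ U]. *)
Lemma compact_open_interpolation (K U : X -> Prop) :
  compact T K -> is_open T U -> subset K U ->
  exists V L, is_open T V /\ compact T L /\ subset K V /\ subset V L /\ subset L U.
Proof.
  intros HK HU HKU.
  destruct (compact_neighbourhood K HK) as [V0 [L0 [HV0 [HL0 [HKV0 HVL0]]]]].
  destruct (compact_compact_separation X T HT K (fun x => L0 x /\ ~ U x)) as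
      [P [Q [HP [HQ [HKP [HCQ HPQ]]]]]]; auto.
  { apply compact_diff_open; auto. }
  { intros z [Hz1 [_ Hz2]]. apply Hz2; auto. }
  exists (fun x => V0 x /\ P x), (fun x => L0 x /\ ~ Q x).
  split; [|split; [|split; [|split]]].
  - apply open_inter; auto.
  - apply compact_diff_open; auto.
  - intros x Hx; split; auto.
  - intros x [Hx1 Hx2]; split; auto. intros Hq; apply (HPQ x); auto.
  - intros x [Hx1 Hx2]. apply NNPP; intros HUx. apply Hx2, HCQ; auto.
Qed.

End LocallyCompact.

Definition rcont {X : Type} (T : topology X) (f : X -> R) : Prop :=
  forall x eps, 0 < eps ->
    exists W, is_open T W /\ W x /\ forall y, W y -> Rabs (f y - f x) < eps.

Section RealContinuity.
Variables (X : Type) (T : topology X).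

Lemma rcont_ext (f g : X -> R) : (forall x, f x = g x) -> rcont T f -> rcont T g.
Proof. intros Hfg Hf. replace g with f; auto. apply functional_extensionality; auto. Qed.

Lemma rcont_const (c : R) : rcont T (fun _ => c).
Proof.
  intros x eps Heps. exists (fun _ => True); split; [apply open_full|split; auto].
  intros y _. rewrite Rminus_diag, Rabs_R0; auto.
Qed.

Lemma rcont_add (f g : X -> R) : rcont T f -> rcont T g -> rcont T (fun x => f x + g x).
Proof.
  intros Hf Hg x eps Heps.
  destruct (Hf x (eps / 2)) as [W1 [HW1 [Hx1 H1]]]; [lra|].
  destruct (Hg x (eps / 2)) as [W2 [HW2 [Hx2 H2]]]; [lra|].
  exists (fun y => W1 y /\ W2 y); split; [apply open_inter; auto|split; auto].
  intros y [Hy1 Hy2]. specialize (H1 y Hy1); specialize (H2 y Hy2).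
  replace (f y + g y - (f x + g x)) with ((f y - f x) + (g y - g x)) by ring.
  eapply Rle_lt_trans; [apply Rabs_triang|lra].
Qed.

Lemma rcont_comp (f : X -> R) (phi : R -> R) :
  rcont T f -> (forall x, continuity_pt phi (f x)) -> rcont T (fun x => phi (f x)).
Proof.
  intros Hf Hphi x eps Heps.
  destruct (Hphi x eps Heps) as [delta [Hdelta Hclose]].
  destruct (Hf x delta Hdelta) as [W [HW [Hx HW']]].
  exists W; repeat split; auto. intros y Hy.
  destruct (Req_dec (f y) (f x)) as [E|E].
  - rewrite E, Rminus_diag, Rabs_R0; auto.
  - apply (Hclose (f y)). split; [split; [constructor|auto]|]. apply HW'; auto.
Qed.

(* Products reduce to sums and squares by polarization: [fg = ((f+g)^2 - (f-g)^2)/4]. *)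
Lemma rcont_mul (f g : X -> R) : rcont T f -> rcont T g -> rcont T (fun x => f x * g x).
Proof.
  intros Hf Hg.
  assert (Hsq : forall h, rcont T h -> rcont T (fun x => h x * h x / 4)).
  { intros h Hh. apply (rcont_comp h (fun t => t * t / 4)); auto. intros x; reg. }
  assert (Hopp : forall h, rcont T h -> rcont T (fun x => - h x)).
  { intros h Hh. apply (rcont_comp h Ropp); auto. intros x; reg. }
  apply (rcont_ext (fun x => (f x + g x) * (f x + g x) / 4
                             + - ((f x + - g x) * (f x + - g x) / 4))).
  - intros x; field.
  - apply rcont_add; [apply Hsq|apply Hopp, Hsq]; apply rcont_add; auto.
Qed.

Lemma rcont_max (f : X -> R) (c : R) : rcont T f -> rcont T (fun x => Rmax (f x) c).
Proof.
  intros Hf x eps Heps. destruct (Hf x eps Heps) as [W [HW [Hx HW']]].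
  exists W; repeat split; auto. intros y Hy. specialize (HW' y Hy).
  unfold Rmax in *; repeat destruct Rle_dec; unfold Rabs in *;
    repeat destruct Rcase_abs; lra.
Qed.

Lemma rcont_precomp (f : X -> R) (m : X -> X) :
  rcont T f -> continuous T m -> rcont T (fun x => f (m x)).
Proof.
  intros Hf Hm x eps Heps. destruct (Hf (m x) eps Heps) as [W [HW [Hx HW']]].
  exists (fun y => W (m y)); split; [apply Hm; auto|split; auto].
Qed.

Lemma rcont_open_gt (f : X -> R) (c : R) : rcont T f -> is_open T (fun x => c < f x).
Proof.
  intros Hf. apply open_local. intros x Hx.
  destruct (Hf x (f x - c)) as [W [HW [HWx HW']]]; [lra|].
  exists W; repeat split; auto. intros y Hy. specialize (HW' y Hy).
  unfold Rabs in HW'; destruct Rcase_abs in HW'; lra.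
Qed.

Lemma rcont_open_lt (f : X -> R) (c : R) : rcont T f -> is_open T (fun x => f x < c).
Proof.
  intros Hf. apply open_local. intros x Hx.
  destruct (Hf x (c - f x)) as [W [HW [HWx HW']]]; [lra|].
  exists W; repeat split; auto. intros y Hy. specialize (HW' y Hy).
  unfold Rabs in HW'; destruct Rcase_abs in HW'; lra.
Qed.

Lemma rcont_of_open_levels (f : X -> R) :
  (forall c, is_open T (fun x => c < f x)) -> (forall c, is_open T (fun x => f x < c)) ->
  rcont T f.
Proof.
  intros Hgt Hlt x eps Heps. exists (fun y => f x - eps < f y /\ f y < f x + eps).
  split; [apply open_inter; auto|split; [lra|]].
  intros y [Hy1 Hy2]. unfold Rabs; destruct Rcase_abs; lra.
Qed.

End RealContinuity.

Definition dyadic (n k : nat) : R := INR k / 2 ^ n.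

Lemma pow2_pos (n : nat) : 0 < 2 ^ n.
Proof. apply pow_lt; lra. Qed.

Lemma INR_pow2 (n : nat) : INR (2 ^ n) = 2 ^ n.
Proof. rewrite pow_INR. replace (INR 2) with 2 by (simpl; lra). reflexivity. Qed.

Lemma dyadic_nonneg (n k : nat) : 0 <= dyadic n k.
Proof.
  unfold dyadic, Rdiv. apply Rmult_le_pos; [apply pos_INR|].
  left; apply Rinv_0_lt_compat, pow2_pos.
Qed.

Lemma dyadic_le1 (n k : nat) : (k <= 2 ^ n)%nat -> dyadic n k <= 1.
Proof.
  intros Hk. apply le_INR in Hk. rewrite INR_pow2 in Hk. pose proof (pow2_pos n).
  unfold dyadic. apply (Rmult_le_reg_r (2 ^ n)); auto.
  unfold Rdiv. rewrite Rmult_assoc, Rinv_l by lra. lra.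
Qed.

Lemma dyadic_cross (n k n' k' : nat) :
  dyadic n k - dyadic n' k' = (INR (k * 2 ^ n') - INR (k' * 2 ^ n)) / 2 ^ (n + n').
Proof.
  unfold dyadic. rewrite !mult_INR, !INR_pow2, pow_add.
  pose proof (pow2_pos n); pose proof (pow2_pos n'). field; lra.
Qed.

Lemma dyadic_lt_nat (n k n' k' : nat) :
  dyadic n k < dyadic n' k' -> (k * 2 ^ n' < k' * 2 ^ n)%nat.
Proof.
  intros H. apply INR_lt.
  assert (Hq : (INR (k * 2 ^ n') - INR (k' * 2 ^ n)) / 2 ^ (n + n') < 0).
  { rewrite <- dyadic_cross. lra. }
  unfold Rdiv in Hq.
  pose proof (Rinv_0_lt_compat _ (pow2_pos (n + n'))). nra.
Qed.

Lemma dyadic_le_nat (n k n' k' : nat) :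
  dyadic n k <= dyadic n' k' -> (k * 2 ^ n' <= k' * 2 ^ n)%nat.
Proof.
  intros H. apply INR_le.
  assert (Hq : (INR (k * 2 ^ n') - INR (k' * 2 ^ n)) / 2 ^ (n + n') <= 0).
  { rewrite <- dyadic_cross. lra. }
  unfold Rdiv in Hq.
  pose proof (Rinv_0_lt_compat _ (pow2_pos (n + n'))). nra.
Qed.

Lemma dyadic_dense (lo hi : R) :
  0 <= lo -> lo < hi -> hi <= 1 ->
  exists n k, (k <= 2 ^ n)%nat /\ lo < dyadic n k /\ dyadic n k < hi.
Proof.
  intros Hlo Hlohi Hhi.
  destruct (archimed_cor1 (hi - lo)) as [N [HN HN0]]; [lra|].
  assert (HNpow : INR N <= 2 ^ N).
  { clear. induction N as [|N IH]; [simpl; lra|]. rewrite S_INR; simpl pow.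
    assert (1 <= 2 ^ N) by (apply pow_R1_Rle; lra). lra. }
  pose proof (pow2_pos N) as Hpow.
  assert (Hstep : 1 < (hi - lo) * 2 ^ N).
  { apply lt_0_INR in HN0.
    apply (Rmult_lt_compat_r (INR N)) in HN; auto. rewrite Rinv_l in HN by lra. nra. }
  destruct (archimed (lo * 2 ^ N)) as [Hup1 Hup2].
  set (z := up (lo * 2 ^ N)) in *.
  assert (Hz : (0 <= z)%Z) by (apply le_IZR; nra).
  assert (Hk : INR (Z.to_nat z) = IZR z) by (rewrite INR_IZR_INZ, Z2Nat.id; auto).
  assert (Hbelow : IZR z < hi * 2 ^ N) by lra.
  exists N, (Z.to_nat z). unfold dyadic. rewrite Hk. split; [|split].
  - apply INR_le. rewrite Hk, INR_pow2. nra.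
  - apply (Rmult_lt_reg_r (2 ^ N)); auto. unfold Rdiv.
    rewrite Rmult_assoc, Rinv_l, Rmult_1_r by lra. lra.
  - apply (Rmult_lt_reg_r (2 ^ N)); auto. unfold Rdiv.
    rewrite Rmult_assoc, Rinv_l, Rmult_1_r by lra. lra.
Qed.

(* Urysohn's function is built from a chain of such pairs
   indexed by the dyadic rationals of [0, 1]. *)
Definition nested_pair {X : Type} (T : topology X) (p : (X -> Prop) * (X -> Prop)) : Prop :=
  is_open T (fst p) /\ compact T (snd p) /\ subset (fst p) (snd p).

Definition pair_below {X : Type} (p q : (X -> Prop) * (X -> Prop)) : Prop :=
  subset (snd p) (fst q).

(* A chosen nested pair strictly between [p] and [q], when one exists. *)
Definition pair_between {X : Type} (T : topology X) (p q : (X -> Prop) * (X -> Prop)) :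
    (X -> Prop) * (X -> Prop) :=
  epsilon (inhabits ((fun _ => False), (fun _ => False)))
          (fun r => nested_pair T r /\ pair_below p r /\ pair_below r q).

Section UrysohnChain.
Variables (X : Type) (T : topology X).
Hypotheses (HT : hausdorff T) (HLC : locally_compact T).

Lemma pair_between_spec (p q : (X -> Prop) * (X -> Prop)) :
  nested_pair T p -> nested_pair T q -> pair_below p q ->
  nested_pair T (pair_between T p q) /\ pair_below p (pair_between T p q) /\
  pair_below (pair_between T p q) q.
Proof.
  intros [Hp1 [Hp2 Hp3]] [Hq1 _] Hpq. unfold pair_between. apply epsilon_spec.
  destruct (compact_open_interpolation X T HT HLC (snd p) (fst q) Hp2 Hq1 Hpq)
    as [V [L [HV [HL [HpV [HVL HLq]]]]]].
  exists (V, L). unfold nested_pair, pair_below; simpl; auto.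
Qed.

Variables (p0 p1 : (X -> Prop) * (X -> Prop)).
Hypotheses (Hp0 : nested_pair T p0) (Hp1 : nested_pair T p1) (Hp01 : pair_below p0 p1).

(* [chain n k] is the pair attached to the dyadic [k / 2^n]: level [n+1] keeps the
   pairs of level [n] at even indices and inserts [pair_between] at odd ones. *)
Fixpoint chain (n k : nat) : (X -> Prop) * (X -> Prop) :=
  match n with
  | O => match k with O => p0 | _ => p1 end
  | S n => if Nat.even k then chain n (Nat.div2 k)
           else pair_between T (chain n (Nat.div2 k)) (chain n (S (Nat.div2 k)))
  end.

Lemma chain_even (n m : nat) : chain (S n) (2 * m) = chain n m.
Proof. cbn [chain]. rewrite Nat.even_even, Nat.div2_even. reflexivity. Qed.

Lemma chain_odd (n m : nat) :
  chain (S n) (2 * m + 1) = pair_between T (chain n m) (chain n (S m)).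
Proof. cbn [chain]. rewrite Nat.even_odd, Nat.div2_odd'. reflexivity. Qed.

Lemma chain_level (n : nat) :
  (forall k, (k <= 2 ^ n)%nat -> nested_pair T (chain n k)) /\
  (forall k, (k < 2 ^ n)%nat -> pair_below (chain n k) (chain n (S k))).
Proof.
  induction n as [|n [IHpair IHbelow]].
  - simpl. split.
    + intros [|[|k]] Hk; auto; lia.
    + intros [|k] Hk; auto; lia.
  - assert (Hmid : forall m, (m < 2 ^ n)%nat ->
              let r := pair_between T (chain n m) (chain n (S m)) in
              nested_pair T r /\ pair_below (chain n m) r /\ pair_below r (chain n (S m))).
    { intros m Hm. apply pair_between_spec; [apply IHpair; lia|apply IHpair; lia|auto]. }
    rewrite Nat.pow_succ_r'. split.
    + intros k Hk. destruct (Nat.Even_or_Odd k) as [[m ->]|[m ->]].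
      * rewrite chain_even. apply IHpair; lia.
      * rewrite chain_odd. apply Hmid; lia.
    + intros k Hk. destruct (Nat.Even_or_Odd k) as [[m ->]|[m ->]].
      * replace (S (2 * m)) with (2 * m + 1)%nat by lia.
        rewrite chain_even, chain_odd. apply Hmid; lia.
      * replace (S (2 * m + 1)) with (2 * S m)%nat by lia.
        rewrite chain_even, chain_odd. apply Hmid; lia.
Qed.

Lemma chain_pair (n k : nat) : (k <= 2 ^ n)%nat -> nested_pair T (chain n k).
Proof. apply chain_level. Qed.

Lemma chain_increasing (n i j : nat) :
  (i < j <= 2 ^ n)%nat -> pair_below (chain n i) (chain n j).
Proof.
  intros Hij. destruct (chain_level n) as [Hpair Hbelow].
  induction j as [|j IH]; [lia|].
  destruct (Nat.eq_dec i j) as [->|Hne]; [apply Hbelow; lia|].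
  intros x Hx. apply (Hbelow j ltac:(lia)).
  destruct (Hpair j ltac:(lia)) as [_ [_ Hsub]]. apply Hsub, IH; auto; lia.
Qed.

Lemma chain_refine (m n k : nat) : chain (m + n) (k * 2 ^ m) = chain n k.
Proof.
  induction m as [|m IH].
  - simpl. f_equal. lia.
  - replace (S m + n)%nat with (S (m + n)) by lia.
    replace (k * 2 ^ S m)%nat with (2 * (k * 2 ^ m))%nat by (simpl; lia).
    rewrite chain_even; auto.
Qed.

Lemma chain_below (n k n' k' : nat) :
  (k <= 2 ^ n)%nat -> (k' <= 2 ^ n')%nat -> dyadic n k < dyadic n' k' ->
  pair_below (chain n k) (chain n' k').
Proof.
  intros Hk Hk' Hlt. apply dyadic_lt_nat in Hlt.
  rewrite <- (chain_refine n' n k), <- (chain_refine n n' k'), (Nat.add_comm n n').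
  apply chain_increasing. split; auto.
  rewrite Nat.pow_add_r. apply Nat.mul_le_mono_r; auto.
Qed.

Lemma chain_open_in_compact (n k n' k' : nat) :
  (k <= 2 ^ n)%nat -> (k' <= 2 ^ n')%nat -> dyadic n k <= dyadic n' k' ->
  subset (fst (chain n k)) (snd (chain n' k')).
Proof.
  intros Hk Hk' Hle. destruct (Rle_lt_or_eq _ _ Hle) as [Hlt|Heq].
  - intros x Hx. destruct (chain_pair n' k' Hk') as [_ [_ Hsub]].
    apply Hsub, (chain_below n k n' k'); auto.
    destruct (chain_pair n k Hk) as [_ [_ Hsub']]. apply Hsub'; auto.
  - assert (E : (k * 2 ^ n' = k' * 2 ^ n)%nat)
      by (apply Nat.le_antisymm; apply dyadic_le_nat; lra).
    rewrite <- (chain_refine n' n k), <- (chain_refine n n' k'), (Nat.add_comm n n'), E.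
    apply chain_pair. rewrite Nat.pow_add_r. apply Nat.mul_le_mono_r; auto.
Qed.

Definition urysohn_values (x : X) (r : R) : Prop :=
  r = 0 \/ exists n k, (k <= 2 ^ n)%nat /\ fst (chain n k) x /\ r = 1 - dyadic n k.

Lemma urysohn_values_bound (x : X) : bound (urysohn_values x).
Proof.
  exists 1. intros r [->|[n [k [_ [_ ->]]]]]; [lra|]. pose proof (dyadic_nonneg n k); lra.
Qed.

Definition urysohn_fun (x : X) : R :=
  proj1_sig (completeness (urysohn_values x) (urysohn_values_bound x)
                          (ex_intro _ 0 (or_introl eq_refl))).

Lemma urysohn_fun_lub (x : X) : is_lub (urysohn_values x) (urysohn_fun x).
Proof. unfold urysohn_fun. destruct completeness; auto. Qed.

Lemma urysohn_fun_ge0 (x : X) : 0 <= urysohn_fun x.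
Proof. apply (urysohn_fun_lub x); left; auto. Qed.

Lemma urysohn_fun_le1 (x : X) : urysohn_fun x <= 1.
Proof.
  apply (urysohn_fun_lub x).
  intros r [->|[n [k [_ [_ ->]]]]]; [lra|]. pose proof (dyadic_nonneg n k); lra.
Qed.

Lemma urysohn_fun_lower (x : X) (n k : nat) :
  (k <= 2 ^ n)%nat -> fst (chain n k) x -> 1 - dyadic n k <= urysohn_fun x.
Proof. intros Hk Hx. apply (urysohn_fun_lub x); right; eauto. Qed.

Lemma urysohn_fun_approx (x : X) (c : R) :
  0 <= c -> c < urysohn_fun x ->
  exists n k, (k <= 2 ^ n)%nat /\ fst (chain n k) x /\ c < 1 - dyadic n k.
Proof.
  intros Hc Hcu. apply NNPP; intros Hnone.
  assert (urysohn_fun x <= c); [|lra]. apply (urysohn_fun_lub x).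
  intros r [->|[n [k [Hk [Hx ->]]]]]; auto.
  apply Rnot_lt_le; intros Hlt. apply Hnone; eauto.
Qed.

Lemma urysohn_fun_upper (x : X) (n k : nat) :
  (k <= 2 ^ n)%nat -> ~ snd (chain n k) x -> urysohn_fun x <= Rmax 0 (1 - dyadic n k).
Proof.
  intros Hk Hx. apply (urysohn_fun_lub x).
  intros r [->|[n' [k' [Hk' [Hx' ->]]]]]; [apply Rmax_l|].
  destruct (Rle_lt_dec (dyadic n' k') (dyadic n k)) as [Hle|Hlt].
  - exfalso. apply Hx, (chain_open_in_compact n' k' n k); auto.
  - eapply Rle_trans; [|apply Rmax_r]. lra.
Qed.

(* Super-level sets are open as unions of the open sets [V_(n,k)]. *)
Lemma urysohn_fun_open_gt (c : R) : is_open T (fun x => c < urysohn_fun x).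
Proof.
  destruct (Rlt_dec c 0) as [Hc|Hc].
  - apply (open_ext X T (fun _ => True)); [|apply open_full].
    intros x; split; auto. intros _. pose proof (urysohn_fun_ge0 x); lra.
  - apply open_local. intros x Hx.
    destruct (urysohn_fun_approx x c ltac:(lra) Hx) as [n [k [Hk [Hxk Hck]]]].
    exists (fst (chain n k)). split; [apply (chain_pair n k Hk)|split; auto].
    intros y Hy. pose proof (urysohn_fun_lower y n k Hk Hy). lra.
Qed.

(* Below-level sets are open because the compact sets [L_(n,k)] are closed. *)
Lemma urysohn_fun_open_lt (c : R) : is_open T (fun x => urysohn_fun x < c).
Proof.
  destruct (Rlt_dec 1 c) as [Hc|Hc].
  - apply (open_ext X T (fun _ => True)); [|apply open_full].
    intros x; split; auto. intros _. pose proof (urysohn_fun_le1 x); lra.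
  - apply open_local. intros x Hx. pose proof (urysohn_fun_ge0 x).
    destruct (dyadic_dense (1 - c) (1 - urysohn_fun x)) as [n' [k' [Hk' [Hl' Hh']]]];
      try lra.
    destruct (dyadic_dense (1 - c) (dyadic n' k')) as [n [k [Hk [Hl Hh]]]]; try lra.
    assert (Hnx : ~ snd (chain n k) x).
    { intros Hx'. apply (chain_below n k n' k') in Hx'; auto.
      pose proof (urysohn_fun_lower x n' k' Hk' Hx'). lra. }
    exists (fun y => ~ snd (chain n k) y). split; [|split; auto].
    + apply compact_complement_open; auto. apply (chain_pair n k Hk).
    + intros y Hy. pose proof (urysohn_fun_upper y n k Hk Hy).
      unfold Rmax in *; destruct Rle_dec; lra.
Qed.

End UrysohnChain.

Lemma urysohn (X : Type) (T : topology X) (HT : hausdorff T) (HLC : locally_compact T)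
    (K U : X -> Prop) :
  compact T K -> is_open T U -> subset K U ->
  exists u : X -> R, rcont T u /\ (forall x, 0 <= u x <= 1) /\ (forall x, K x -> u x = 1) /\
    exists L, compact T L /\ subset L U /\ forall x, u x <> 0 -> L x.
Proof.
  intros HK HU HKU.
  destruct (compact_open_interpolation X T HT HLC K U HK HU HKU)
    as [V1 [L1 [HV1 [HL1 [HKV1 [HVL1 HLU1]]]]]].
  destruct (compact_open_interpolation X T HT HLC K V1 HK HV1 HKV1)
    as [V0 [L0 [HV0 [HL0 [HKV0 [HVL0 HLV1]]]]]].
  assert (Hp0 : nested_pair T (V0, L0)) by (unfold nested_pair; simpl; auto).
  assert (Hp1 : nested_pair T (V1, L1)) by (unfold nested_pair; simpl; auto).
  assert (Hp01 : pair_below (V0, L0) (V1, L1)) by (unfold pair_below; simpl; auto).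
  set (u := urysohn_fun X T (V0, L0) (V1, L1)).
  exists u. split; [|split; [|split]].
  - apply rcont_of_open_levels; intros c;
      [apply urysohn_fun_open_gt|apply urysohn_fun_open_lt]; auto.
  - intros x; split; [apply urysohn_fun_ge0|apply urysohn_fun_le1].
  - intros x Hx. apply Rle_antisym; [apply urysohn_fun_le1|].
    pose proof (urysohn_fun_lower X T (V0, L0) (V1, L1) x 0 0 ltac:(simpl; lia) (HKV0 x Hx))
      as Hlow.
    unfold dyadic in Hlow; simpl in Hlow. unfold u. lra.
  - exists L1; split; [|split]; auto.
    intros x Hx. pose proof (urysohn_fun_ge0 X T (V0, L0) (V1, L1) x).
    destruct (urysohn_fun_approx X T (V0, L0) (V1, L1) x 0 ltac:(lra) ltac:(unfold u in Hx; lra))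
      as [n [k [Hk [Hxk _]]]].
    apply (chain_open_in_compact X T HT HLC (V0, L0) (V1, L1) Hp0 Hp1 Hp01 n k 0 1 Hk)
      in Hxk; auto.
    apply dyadic_le1 in Hk. unfold dyadic at 2. simpl. lra.
Qed.

Definition Cnorm2 (z : C) : R := fst z * fst z + snd z * snd z.

Lemma Cnorm2_nonneg (z : C) : 0 <= Cnorm2 z.
Proof. unfold Cnorm2; nra. Qed.

Lemma Cabs_sq (z : C) : Cabs z * Cabs z = Cnorm2 z.
Proof. unfold Cabs. apply sqrt_sqrt, Cnorm2_nonneg. Qed.

Lemma Cnorm2_lt (z : C) (d e : R) : Cabs z <= d -> d < e -> Cnorm2 z < e * e.
Proof.
  intros H1 H2. rewrite <- Cabs_sq. assert (0 <= Cabs z) by apply sqrt_pos. nra.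
Qed.

Lemma Cabs_fst (z : C) : Rabs (fst z) <= Cabs z.
Proof. unfold Cabs. rewrite <- sqrt_Rsqr_abs. apply sqrt_le_1_alt. unfold Rsqr. nra. Qed.

Lemma Cabs_real (r : R) : Cabs (r, 0) = Rabs r.
Proof. unfold Cabs; simpl. rewrite <- sqrt_Rsqr_abs. f_equal. unfold Rsqr; ring. Qed.

Section RealElementsOfC0.
Variables (X : Type) (T : topology X).

Lemma real_in_C0 (f : X -> R) :
  rcont T f -> (exists L, compact T L /\ forall x, f x <> 0 -> L x) ->
  in_C0 T (fun x => (f x, 0)).
Proof.
  intros Hf [L [HL HfL]]. split.
  - intros x eps Heps. destruct (Hf x eps Heps) as [W [HW [Hx HW']]].
    exists W; repeat split; auto. intros y Hy.
    unfold Csub; simpl. rewrite Rminus_0_r, Cabs_real. auto.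
  - intros eps Heps. exists L; split; auto. intros x Hx.
    destruct (Req_dec (f x) 0) as [E|E]; [|exfalso; auto].
    rewrite E, Cabs_real, Rabs_R0; auto.
Qed.

Lemma real_square_positive_C0 (f : X -> R) :
  rcont T f -> (exists L, compact T L /\ forall x, f x <> 0 -> L x) ->
  positive_C0 T (fun x => (f x * f x, 0)).
Proof.
  intros Hf [L [HL HfL]]. split.
  - apply real_in_C0; [apply rcont_mul; auto|].
    exists L; split; auto. intros x Hx; apply HfL; intros E; apply Hx; rewrite E; ring.
  - intros x; simpl; split; auto. nra.
Qed.

Lemma rcont_fst (f : X -> C) : continuous_C T f -> rcont T (fun x => fst (f x)).
Proof.
  intros Hf x eps Heps. destruct (Hf x eps Heps) as [W [HW [Hx HW']]].
  exists W; repeat split; auto. intros y Hy.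
  eapply Rle_lt_trans; [apply (Cabs_fst (Csub (f y) (f x)))|auto].
Qed.

Lemma positive_real (a : X -> C) (x : X) : positive_C0 T a -> a x = (fst (a x), 0).
Proof. intros [_ Ha]. destruct (Ha x) as [H _]. destruct (a x); simpl in *; subst; auto. Qed.

Lemma level_compact (a : X -> C) (d : R) :
  positive_C0 T a -> 0 < d -> compact T (fun x => d <= fst (a x)).
Proof.
  intros [[Hc Hv] Hpos] Hd. destruct (Hv d Hd) as [Ka [HKa HKv]].
  apply (compact_ext X T (fun x => Ka x /\ ~ fst (a x) < d)).
  - intros x; split; [intros [_ H]; lra|].
    intros H. split; [|lra].
    apply NNPP; intros Hn. specialize (HKv x Hn). pose proof (Cabs_fst (a x)) as Hfst.
    rewrite Rabs_pos_eq in Hfst by apply Hpos. lra.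
  - apply compact_diff_open; auto. apply rcont_open_lt, rcont_fst; auto.
Qed.

End RealElementsOfC0.

Section Action.
Variables (X G : Type) (T : topology X) (Gr : group G) (alpha : G -> X -> X).
Hypothesis Halpha : action_by_homeos T Gr alpha.

Lemma act_inv_l (g : G) (x : X) : alpha (ginv Gr g) (alpha g x) = x.
Proof. destruct Halpha as [H1 [H2 _]]. rewrite <- H2, gmulVg, H1; auto. Qed.

Lemma act_inv_r (g : G) (x : X) : alpha g (alpha (ginv Gr g) x) = x.
Proof. destruct Halpha as [H1 [H2 _]]. rewrite <- H2, gmulgV, H1; auto. Qed.

Lemma act_cont (g : G) : continuous T (alpha g).
Proof. destruct Halpha as [_ [_ H3]]. destruct (H3 g); auto. Qed.

End Action.

Section Equivalence.
Variables (X G : Type) (T : topology X) (Gr : group G) (alpha : G -> X -> X).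
Hypotheses (HT : hausdorff T) (Halpha : action_by_homeos T Gr alpha).

(* If [alpha_g] maps [{a >= d}] into [{a > d/2}],
   the element [e = sqrt (max (sigma_g a - d, 0) / max (a, d/2))] of [C_0(X)] satisfies
   [e^* a e = sigma_g a - d] on [{sigma_g a >= d}] and vanishes elsewhere; hence
   [||e^* a e - sigma_g a|| <= d] and [e] is supported in [alpha_g({a >= d})]. *)
Lemma cutoff_element (a : X -> C) (d : R) (g : G) :
  positive_C0 T a -> 0 < d ->
  (forall x, d <= fst (a x) -> d / 2 < fst (a (alpha g x))) ->
  exists e : X -> C, in_C0 T e /\
    (forall x, Cabs (Csub (Cmul (Cmul (Cconj (e x)) (a x)) (e x)) (sigma Gr alpha g a x)) <= d) /\
    (forall x, fst (a (alpha (ginv Gr g) x)) < d -> e x = (0, 0)).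
Proof.
  intros Ha Hd Hg.
  set (ra := fun x => fst (a x)).
  set (sa := fun x => ra (alpha (ginv Gr g) x)).
  set (e := fun x => sqrt (Rmax (sa x - d) 0 * / Rmax (ra x) (d / 2))).
  assert (Hra0 : forall x, 0 <= ra x) by (intros x; apply (proj2 Ha)).
  assert (Hden : forall x, 0 < Rmax (ra x) (d / 2)).
  { intros x. eapply Rlt_le_trans; [|apply Rmax_r]. lra. }
  assert (Hrad : forall x, 0 <= Rmax (sa x - d) 0 * / Rmax (ra x) (d / 2)).
  { intros x. apply Rmult_le_pos; [apply Rmax_r|left; apply Rinv_0_lt_compat, Hden]. }
  assert (He_off : forall x, sa x < d -> e x = 0).
  { intros x Hx. unfold e. rewrite Rmax_right by lra. rewrite Rmult_0_l. apply sqrt_0. }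
  assert (He_on : forall x, d <= sa x -> e x * e x * ra x = sa x - d).
  { intros x Hx.
    assert (Hrx : d / 2 < ra x).
    { unfold ra. rewrite <- (act_inv_r X G T Gr alpha Halpha g x). apply Hg, Hx. }
    unfold e. rewrite sqrt_sqrt by apply Hrad.
    rewrite Rmax_left by lra. rewrite Rmax_left by lra. field. lra. }
  assert (Hcont : rcont T e).
  { assert (Hra : rcont T ra) by (apply rcont_fst, (proj1 (proj1 Ha))).
    apply (rcont_comp X T _ sqrt); [|intros x; apply continuity_pt_sqrt, Hrad].
    apply rcont_mul.
    - apply rcont_max, rcont_add; [|apply rcont_const].
      apply (rcont_precomp X T ra); [exact Hra|apply (act_cont X G T Gr alpha Halpha)].
    - apply (rcont_comp X T (fun x => Rmax (ra x) (d / 2)) Rinv); [apply rcont_max; auto|].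
      intros x. specialize (Hden x). reg. lra. }
  exists (fun x => (e x, 0)). split; [|split].
  - apply real_in_C0; auto.
    exists (fun x => d <= fst (a (alpha (ginv Gr g) x))). split.
    + apply (compact_bijective_image X T (alpha g) (alpha (ginv Gr g))
                                     (fun y => d <= fst (a y))).
      * apply (act_cont X G T Gr alpha Halpha).
      * apply (act_inv_l X G T Gr alpha Halpha).
      * apply (act_inv_r X G T Gr alpha Halpha).
      * apply level_compact; auto.
    + intros x Hx. apply NNPP; intros Hn. apply Hx, He_off. unfold sa, ra. lra.
  - intros x. unfold sigma. rewrite (positive_real X T a x Ha).
    rewrite (positive_real X T a (alpha (ginv Gr g) x) Ha).
    replace (Csub (Cmul (Cmul (Cconj (e x, 0)) (fst (a x), 0)) (e x, 0))
                  (fst (a (alpha (ginv Gr g) x)), 0))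
      with (e x * e x * ra x - sa x, 0)
      by (unfold Csub, Cmul, Cconj, sa, ra; simpl; f_equal; ring).
    rewrite Cabs_real.
    assert (Hsa0 : 0 <= sa x) by apply Hra0.
    destruct (Rlt_dec (sa x) d) as [Hlt|Hge].
    + rewrite He_off by auto. rewrite Rabs_left1; lra.
    + rewrite He_on by lra. replace (sa x - d - sa x) with (- d) by ring.
      rewrite Rabs_Ropp, Rabs_pos_eq; lra.
  - intros x Hx. rewrite He_off; auto.
Qed.

(* (ii) => (i): apply (ii) to the compact sets [{a >= eps/2}], [{b >= eps/2}] inside the
   open sets [{a > eps/4}], [{b > eps/4}]; the cut-off elements of the two moved sets
   have disjoint supports, so [d1^* c d2 = 0]. *)
Lemma G_separating_of_compact_separating :
  compact_separating T Gr alpha -> G_separating T Gr alpha.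
Proof.
  intros Hcs a b c Ha Hb Hc eps Heps.
  set (d := eps / 2). assert (Hd : 0 < d) by (unfold d; lra).
  destruct (Hcs (fun x => d / 2 < fst (a x)) (fun x => d / 2 < fst (b x))
                (fun x => d <= fst (a x)) (fun x => d <= fst (b x)))
    as [g1 [g2 [Hg1 [Hg2 Hdisj]]]].
  - apply rcont_open_gt, rcont_fst, (proj1 (proj1 Ha)).
  - apply rcont_open_gt, rcont_fst, (proj1 (proj1 Hb)).
  - apply level_compact; auto.
  - apply level_compact; auto.
  - intros x Hx; simpl in *; lra.
  - intros x Hx; simpl in *; lra.
  - destruct (cutoff_element a d g1 Ha Hd Hg1) as [d1 [Hd1 [Hnorm1 Hoff1]]].
    destruct (cutoff_element b d g2 Hb Hd Hg2) as [d2 [Hd2 [Hnorm2 Hoff2]]].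
    exists d1, d2. split; auto. split; auto. exists g1, g2.
    split; [|split].
    + exists d; split; [unfold d; lra|exact Hnorm1].
    + exists d; split; [unfold d; lra|exact Hnorm2].
    + exists 0; split; [lra|]. intros x.
      assert (Hzero : Cmul (Cmul (Cconj (d1 x)) (c x)) (d2 x) = (0, 0)).
      { destruct (Rlt_dec (fst (a (alpha (ginv Gr g1) x))) d) as [h1|h1].
        { rewrite (Hoff1 x h1). unfold Cmul, Cconj; simpl; f_equal; ring. }
        destruct (Rlt_dec (fst (b (alpha (ginv Gr g2) x))) d) as [h2|h2].
        { rewrite (Hoff2 x h2). unfold Cmul, Cconj; simpl; f_equal; ring. }
        exfalso. apply (Hdisj (alpha (ginv Gr g1) x) (alpha (ginv Gr g2) x)); [lra|lra|].
        rewrite !(act_inv_r X G T Gr alpha Halpha); auto. }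
      rewrite Hzero, Cabs_real, Rabs_R0. lra.
Qed.

Lemma transported_unit_lower_bound (u : X -> R) (d : X -> C) (g : G) (delta : R)
    (K : X -> Prop) :
  (forall x, K x -> u x = 1) -> delta < 1 / 4 ->
  (forall x, Cabs (Csub (Cmul (Cmul (Cconj (d x)) (u x * u x, 0)) (d x))
                        (sigma Gr alpha g (fun z => (u z * u z, 0)) x)) <= delta) ->
  forall x, K x -> 3 / 4 < u (alpha g x) * u (alpha g x) * Cnorm2 (d (alpha g x)).
Proof.
  intros Hu1 Hdelta Hclose x Hx. specialize (Hclose (alpha g x)). unfold sigma in Hclose.
  rewrite (act_inv_l X G T Gr alpha Halpha), (Hu1 x Hx) in Hclose.
  set (y := alpha g x) in *.
  pose proof (Cabs_fst (Csub (Cmul (Cmul (Cconj (d y)) (u y * u y, 0)) (d y)) (1 * 1, 0)))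
    as Hfst.
  replace (fst (Csub (Cmul (Cmul (Cconj (d y)) (u y * u y, 0)) (d y)) (1 * 1, 0)))
    with (u y * u y * Cnorm2 (d y) - 1) in Hfst
    by (unfold Csub, Cmul, Cconj, Cnorm2; simpl; ring).
  unfold Rabs in Hfst; destruct Rcase_abs in Hfst; lra.
Qed.

(* (i) => (ii): take Urysohn functions [u], [v] for [K1 ⊆ U1], [K2 ⊆ U2] and apply (i)
   to [a = u^2], [b = v^2], [c = uv] with [eps = 1/4].  On [alpha_gi(Ki)] the functions
   [u^2 |d1|^2], resp. [v^2 |d2|^2], exceed [3/4]; so these images lie in the supports
   of [u], [v], and at a common point [|d1^* c d2|^2] would exceed [9/16 > 1/16]. *)
Lemma compact_separating_of_G_separating :
  locally_compact T -> G_separating T Gr alpha -> compact_separating T Gr alpha.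
Proof.
  intros HLC Hgs U1 U2 K1 K2 HU1 HU2 HK1 HK2 HKU1 HKU2.
  destruct (urysohn X T HT HLC K1 U1 HK1 HU1 HKU1)
    as [u [Hu [_ [Hu1 [L1 [HL1 [HLU1 HuL1]]]]]]].
  destruct (urysohn X T HT HLC K2 U2 HK2 HU2 HKU2)
    as [v [Hv [_ [Hv1 [L2 [HL2 [HLU2 HvL2]]]]]]].
  assert (Hc : in_C0 T (fun x => (u x * v x, 0))).
  { apply real_in_C0; [apply rcont_mul; auto|].
    exists L1; split; auto. intros x Hx; apply HuL1; intros E; apply Hx; rewrite E; ring. }
  destruct (Hgs _ _ _ (real_square_positive_C0 X T u Hu (ex_intro _ L1 (conj HL1 HuL1)))
                      (real_square_positive_C0 X T v Hv (ex_intro _ L2 (conj HL2 HvL2)))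
                      Hc (1 / 4) ltac:(lra))
    as [d1 [d2 [_ [_ [g1 [g2 [[e1 [He1 N1]] [[e2 [He2 N2]] [e3 [He3 N3]]]]]]]]]].
  pose proof (transported_unit_lower_bound u d1 g1 e1 K1 Hu1 He1 N1) as Hbig1.
  pose proof (transported_unit_lower_bound v d2 g2 e2 K2 Hv1 He2 N2) as Hbig2.
  exists g1, g2. split; [|split].
  - intros x Hx. apply HLU1, HuL1. intros E. specialize (Hbig1 x Hx). rewrite E in Hbig1.
    lra.
  - intros x Hx. apply HLU2, HvL2. intros E. specialize (Hbig2 x Hx). rewrite E in Hbig2.
    lra.
  - intros x1 x2 Hx1 Hx2 Heq. specialize (Hbig1 x1 Hx1). specialize (Hbig2 x2 Hx2).
    rewrite <- Heq in Hbig2. set (y := alpha g1 x1) in *.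
    pose proof (Cnorm2_lt _ e3 (1 / 4) (N3 y) He3) as Hsmall. simpl in Hsmall.
    replace (Cnorm2 (Cmul (Cmul (Cconj (d1 y)) (u y * v y, 0)) (d2 y)))
      with ((u y * u y * Cnorm2 (d1 y)) * (v y * v y * Cnorm2 (d2 y))) in Hsmall
      by (unfold Cnorm2, Cmul, Cconj; simpl; ring).
    nra.
Qed.

End Equivalence.

Theorem mainTheorem8 (X : Type) (T : topology X)
    (HT2 : hausdorff T) (HLC : locally_compact T)
    (G : Type) (Gr : group G) (alpha : G -> X -> X)
    (Halpha : action_by_homeos T Gr alpha) :
  G_separating T Gr alpha <-> compact_separating T Gr alpha.
Proof.
  split.
  - apply compact_separating_of_G_separating; auto.
  - apply G_separating_of_compact_separating; auto.
Qed.
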